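(* Let $t$ be a positive integer. The following are equivalent: (i) for every set $\{G_1,\dots,G_t\}$ of $t$ graphs from $GRA_\omega$ there exists a graph $G \in GRA_\omega$ such that for every $i=1,\dots,t$ the graphs $G$ and $G_i$ are independent (i.e. $G \not\to G_i$ and $G_i \not\to G$); (ii) $t = 1$.
   Context: All graphs are simple, undirected and loopless. A homomorphism $G \to G'$ is a vertex map preserving edges; $G \to G'$ means one exists. $K_\omega$ denotes the countably infinite complete graph. $GRA_\omega$ denotes the class of all countable non-bipartite graphs that do not contain $K_\omega$ as a subgraph. Two graphs are independent if there is no homomorphism between them in either direction. *)

From Stdlib Require Import Arith.

(* A countable simple undirected loopless graph: vertex set V ⊆ ℕ (every
   countable graph, finite or infinite, is isomorphic to one of these),
   symmetric irreflexive adjacency between vertices. *)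
Record graph := Graph {
  vert : nat -> Prop;
  adj : nat -> nat -> Prop;
  adj_sym : forall x y, adj x y -> adj y x;
  adj_irrefl : forall x, ~ adj x x;
  adj_vert : forall x y, adj x y -> vert x
}.

Definition is_hom (G H : graph) (f : nat -> nat) : Prop :=
  (forall x, vert G x -> vert H (f x)) /\
  (forall x y, adj G x y -> adj H (f x) (f y)).

Definition hom (G H : graph) : Prop := exists f, is_hom G H f.

Definition bipartite (G : graph) : Prop :=
  exists c : nat -> bool, forall x y, adj G x y -> c x <> c y.

Definition contains_Komega (G : graph) : Prop :=
  exists g : nat -> nat,
    (forall n, vert G (g n)) /\
    (forall n m, n <> m -> g n <> g m) /\
    (forall n m, n <> m -> adj G (g n) (g m)).

Definition GRA_omega (G : graph) : Prop :=
  ~ bipartite G /\ ~ contains_Komega G.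

Definition independent (G H : graph) : Prop := ~ hom G H /\ ~ hom H G.

(* For t >= 2, no graph is independent of both a triangle and the universal
   countable triangle-free graph T, since a graph without triangles maps to T.
   For t = 1, let Lam G1 be the comparability graph of the tree of finite
   cliques of G1: it is K_omega-free, and a homomorphism Lam G1 -> G1 would
   build an infinite clique greedily.  So if G1 does not map to Lam G1, then
   Lam G1 is independent of G1.  Otherwise take a shift graph whose odd girth
   exceeds the length of an odd closed walk of G1: G1 does not map to it, and
   it does not map to Lam G1 (hence not to G1), because by Ramsey's theorem a
   homomorphism would send an infinite path of shift edges to a growing chain
   of cliques. *)

From Stdlib Require Import Arith Lia List Cantor Classical ClassicalEpsilon Wf_nat FinFun.
Import ListNotations.

(** * Coding lists of naturals *)

Fixpoint code (l : list nat) : nat :=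
  match l with [] => 0 | a :: r => S (Cantor.to_nat (a, code r)) end.

Lemma code_inj l l' : code l = code l' -> l = l'.
Proof.
  revert l'; induction l as [|a l IH]; intros [|b l']; cbn [code]; intros H;
    try discriminate; auto.
  assert (Heq : (a, code l) = (b, code l')).
  { rewrite <- (Cantor.cancel_of_to (a, code l)), <- (Cantor.cancel_of_to (b, code l')).
    f_equal; congruence. }
  injection Heq as -> Heq. f_equal; auto.
Qed.

Lemma code_cons_gt a r : a < code (a :: r) /\ code r < code (a :: r).
Proof. cbn [code]; pose proof (Cantor.to_nat_non_decreasing a (code r)); lia. Qed.

Lemma code_surj n : exists l, code l = n.
Proof.
  induction n as [n IH] using (well_founded_induction lt_wf).
  destruct n as [|p]; [now exists []|].
  destruct (Cantor.of_nat p) as [a y] eqn:E.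
  pose proof (Cantor.cancel_to_of p) as Hp; rewrite E in Hp.
  pose proof (Cantor.to_nat_non_decreasing a y).
  destruct (IH y) as [l Hl]; [lia|].
  exists (a :: l); cbn [code]; now rewrite Hl, Hp.
Qed.

Definition decode (n : nat) : list nat :=
  proj1_sig (constructive_indefinite_description _ (code_surj n)).

Lemma code_decode n : code (decode n) = n.
Proof. exact (proj2_sig (constructive_indefinite_description _ (code_surj n))). Qed.

Lemma decode_code l : decode (code l) = l.
Proof. apply code_inj, code_decode. Qed.

Lemma In_code_lt a r : In a r -> a < code r.
Proof.
  induction r as [|b r IH]; cbn [In]; [tauto|].
  pose proof (code_cons_gt b r). intros [->|Hi]; [lia|]. specialize (IH Hi); lia.
Qed.

Lemma adj_neq (H : graph) a b : adj H a b -> a <> b.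
Proof. intros Ha ->; exact (adj_irrefl H b Ha). Qed.

Lemma hom_trans A B C : hom A B -> hom B C -> hom A C.
Proof. intros (f & f1 & f2) (g & g1 & g2); exists (fun x => g (f x)); split; auto. Qed.

Lemma bipartite_hom G H : hom G H -> bipartite H -> bipartite G.
Proof. intros (f & _ & Hf) [c Hc]; exists (fun x => c (f x)); auto. Qed.

Lemma not_bipartite_edge G : ~ bipartite G -> exists u v, adj G u v.
Proof.
  intro NB; apply NNPP; intro Hno; apply NB.
  exists (fun _ => true); intros x y h; exfalso; eauto.
Qed.

Definition triangle_free (G : graph) :=
  forall a b c, adj G a b -> adj G b c -> adj G a c -> False.

Lemma triangle_not_bipartite G a b c :
  adj G a b -> adj G b c -> adj G a c -> ~ bipartite G.
Proof.
  intros h1 h2 h3 [col Hc].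
  pose proof (Hc _ _ h1); pose proof (Hc _ _ h2); pose proof (Hc _ _ h3).
  destruct (col a), (col b), (col c); congruence.
Qed.

Lemma triangle_free_Komega_free G : triangle_free G -> ~ contains_Komega G.
Proof. intros TF (g & _ & _ & Ha); apply (TF (g 0) (g 1) (g 2)); apply Ha; lia. Qed.

Lemma injective_unbounded (f : nat -> nat) :
  (forall i j, f i = f j -> i = j) -> forall N, exists i, N < f i.
Proof.
  intros Hinj N; apply NNPP; intro Hno.
  assert (Hnd : NoDup (map f (seq 0 (S (S N))))).
  { apply Injective_map_NoDup; [exact Hinj | apply seq_NoDup]. }
  assert (Hincl : incl (map f (seq 0 (S (S N)))) (seq 0 (S N))).
  { intros x Hx; apply in_map_iff in Hx as (i & <- & _); apply in_seq.
    assert (~ N < f i) by (intro; apply Hno; eauto). lia. }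
  pose proof (NoDup_incl_length Hnd Hincl) as Hl.
  rewrite length_map, !length_seq in Hl; lia.
Qed.

Lemma no_decreasing_sequence (h : nat -> nat) : ~ (forall i, h (S i) < h i).
Proof.
  intro Hdec; assert (forall i, h i + i <= h 0) by (induction i; [lia|specialize (Hdec i); lia]).
  specialize (H (S (h 0))); lia.
Qed.

(** * The graph of cliques [Lam H] *)

Definition prefix (l l' : list nat) := exists r, l' = l ++ r.
Definition comparable (l l' : list nat) := prefix l l' \/ prefix l' l.

Lemma prefix_refl l : prefix l l.
Proof. exists []; now rewrite app_nil_r. Qed.

Lemma prefix_trans a b c : prefix a b -> prefix b c -> prefix a c.
Proof. intros [r ->] [s ->]; exists (r ++ s); now rewrite app_assoc. Qed.

Lemma prefix_length l l' : prefix l l' -> length l <= length l'.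
Proof. intros [r ->]; rewrite length_app; lia. Qed.

Lemma prefix_nth l l' i : prefix l l' -> i < length l -> nth i l' 0 = nth i l 0.
Proof. intros [r ->] Hi; now apply app_nth1. Qed.

Lemma comparable_length_eq l l' : comparable l l' -> length l = length l' -> l = l'.
Proof.
  intros [[r ->]|[r ->]] E; rewrite length_app in E;
    destruct r; simpl in E; try lia; now rewrite app_nil_r.
Qed.

Lemma comparable_prefix_lt l l' :
  comparable l l' -> length l < length l' -> prefix l l'.
Proof. intros [h|h] hl; auto. apply prefix_length in h; lia. Qed.

Definition clique (H : graph) (l : list nat) :=
  (forall i, i < length l -> vert H (nth i l 0)) /\
  (forall i j, i < j -> j < length l -> adj H (nth i l 0) (nth j l 0)).

Lemma clique_nil H : clique H [].
Proof. split; simpl; intros; lia. Qed.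

Lemma clique_single H u : vert H u -> clique H [u].
Proof.
  intro hu; split; simpl; intros i; [intros Hi; now replace i with 0 by lia | lia].
Qed.

Lemma clique_pair H u v : adj H u v -> clique H [u; v].
Proof.
  intro h; split.
  - intros [|[|]] Hi; simpl in *; try lia.
    + eapply adj_vert; eauto.
    + eapply adj_vert, adj_sym; eauto.
  - intros [|[|]] [|[|]] Hij Hj; simpl in *; try lia; auto.
Qed.

Lemma chain_Komega H (L : nat -> list nat) :
  (forall i, clique H (L i)) -> (forall i j, comparable (L i) (L j)) ->
  (forall n, exists i, n < length (L i)) -> contains_Komega H.
Proof.
  intros Hc Hcomp Hun.
  set (io := fun n => proj1_sig (constructive_indefinite_description _ (Hun n))).
  assert (Hio : forall n, n < length (L (io n)))
    by (intro n; exact (proj2_sig (constructive_indefinite_description _ (Hun n)))).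
  set (g := fun n => nth n (L (io n)) 0).
  assert (Key : forall i j, i < j -> adj H (g i) (g j)).
  { intros i j Hij; unfold g.
    destruct (Hcomp (io i) (io j)) as [Hp|Hp].
    - rewrite <- (prefix_nth _ _ i Hp (Hio i)); apply (proj2 (Hc (io j))); auto.
    - rewrite <- (prefix_nth _ _ j Hp (Hio j)); apply (proj2 (Hc (io i))); auto.
      pose proof (prefix_length _ _ Hp); pose proof (Hio j); lia. }
  exists g; split; [|split].
  - intro n; apply (proj1 (Hc (io n))), Hio.
  - intros n m Hnm; destruct (Nat.lt_total n m) as [h|[h|h]]; [| lia |].
    + now apply (adj_neq H), Key.
    + intro E; apply (adj_neq H (g m) (g n)); auto.
  - intros n m Hnm; destruct (Nat.lt_total n m) as [h|[h|h]]; [| lia |].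
    + now apply Key.
    + now apply adj_sym, Key.
Qed.

(* Lam H is the comparability graph of the tree of finite cliques of H
   (a clique is enumerated as a list; the tree order is the prefix order). *)
Definition Lam_vert H n := exists l, n = code l /\ clique H l.
Definition Lam_adj H n m := exists l l',
  n = code l /\ m = code l' /\ clique H l /\ clique H l' /\ comparable l l' /\ l <> l'.

Lemma Lam_adj_sym H x y : Lam_adj H x y -> Lam_adj H y x.
Proof.
  intros (l & l' & -> & -> & h1 & h2 & h3 & h4).
  exists l', l; unfold comparable in *; intuition.
Qed.

Lemma Lam_adj_irrefl H x : ~ Lam_adj H x x.
Proof. intros (l & l' & E & E' & _ & _ & _ & h); apply h, code_inj; congruence. Qed.

Lemma Lam_adj_vert H x y : Lam_adj H x y -> Lam_vert H x.
Proof. intros (l & l' & E & _ & h & _); now exists l. Qed.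

Definition Lam (H : graph) : graph :=
  Graph (Lam_vert H) (Lam_adj H) (Lam_adj_sym H) (Lam_adj_irrefl H) (Lam_adj_vert H).

Lemma Lam_adj_code H l l' :
  adj (Lam H) (code l) (code l') <->
  clique H l /\ clique H l' /\ comparable l l' /\ l <> l'.
Proof.
  split.
  - intros (a & b & E & E' & h); apply code_inj in E; apply code_inj in E'; now subst.
  - intros; now exists l, l'.
Qed.

Lemma Lam_adj_decode H x y :
  adj (Lam H) x y ->
  clique H (decode x) /\ clique H (decode y) /\
  comparable (decode x) (decode y) /\ decode x <> decode y.
Proof. rewrite <- (code_decode x), <- (code_decode y), !decode_code; apply Lam_adj_code. Qed.

Lemma Lam_adj_length H x y :
  adj (Lam H) x y -> length (decode x) <> length (decode y).
Proof.
  intros h E; apply Lam_adj_decode in h as (_ & _ & hc & hne).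
  apply hne, comparable_length_eq; auto.
Qed.

Lemma Lam_Komega_free H : ~ contains_Komega H -> ~ contains_Komega (Lam H).
Proof.
  intros HK (g & _ & _ & Hadj); apply HK.
  set (L := fun n => decode (g n)).
  assert (HA : forall n m, n <> m -> adj (Lam H) (g n) (g m)) by exact Hadj.
  apply (chain_Komega H L).
  - intro i; apply (Lam_adj_decode H _ _ (HA i (S i) ltac:(lia))).
  - intros i j; destruct (Nat.eq_dec i j) as [->|h]; [left; apply prefix_refl|].
    apply (Lam_adj_decode H _ _ (HA i j h)).
  - apply injective_unbounded; intros i j E.
    destruct (Nat.eq_dec i j) as [|h]; auto.
    exfalso; exact (Lam_adj_length H _ _ (HA i j h) E).
Qed.

(* Greedy: extend the clique [s n] by the image of its own code. *)
Lemma hom_Lam_Komega H : hom (Lam H) H -> contains_Komega H.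
Proof.
  intros (f & Hfv & Hfa).
  set (s := fix s n := match n with 0 => [] | S n => s n ++ [f (code (s n))] end).
  assert (Hsn : forall n, s (S n) = s n ++ [f (code (s n))]) by reflexivity.
  assert (Hl : forall n, length (s n) = n)
    by (induction n; [reflexivity | rewrite Hsn, length_app, IHn; simpl; lia]).
  assert (Hnth : forall n i, i < n -> nth i (s n) 0 = f (code (s i))).
  { induction n; intros i Hi; [lia|]; rewrite Hsn.
    destruct (Nat.eq_dec i n) as [->|h].
    - rewrite app_nth2, Hl, Nat.sub_diag by (rewrite Hl; lia); reflexivity.
    - rewrite app_nth1 by (rewrite Hl; lia); apply IHn; lia. }
  assert (Hpre : forall i n, i <= n -> prefix (s i) (s n)).
  { intros i n Hi; induction Hi; [apply prefix_refl|].
    apply (prefix_trans _ _ _ IHHi); rewrite Hsn; eexists; eauto. }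
  assert (Hc : forall n, clique H (s n)).
  { intro n; induction n as [n IH] using (well_founded_induction lt_wf); split.
    - intros i Hi; rewrite Hl in Hi; rewrite Hnth by auto; apply Hfv; exists (s i); auto.
    - intros i j Hij Hj; rewrite Hl in Hj; rewrite !Hnth by lia; apply Hfa, Lam_adj_code.
      split; [apply IH; lia|split; [apply IH; lia|split; [left; apply Hpre; lia|]]].
      intro E; assert (length (s i) = length (s j)) by now rewrite E.
      rewrite !Hl in *; lia. }
  apply (chain_Komega H s Hc).
  - intros i j; destruct (Nat.le_ge_cases i j); [left|right]; now apply Hpre.
  - intro n; exists (S n); rewrite Hl; lia.
Qed.

Lemma Lam_adj_nil_single H u : vert H u -> adj (Lam H) (code []) (code [u]).
Proof.
  intro hu; apply Lam_adj_code.
  split; [apply clique_nil | split; [now apply clique_single | split]].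
  - left; now exists [u].
  - discriminate.
Qed.

Lemma Lam_not_bipartite H u v : adj H u v -> ~ bipartite (Lam H).
Proof.
  intro h; assert (hu : vert H u) by (eapply adj_vert; eauto).
  apply (triangle_not_bipartite (Lam H) (code []) (code [u]) (code [u; v])).
  - now apply Lam_adj_nil_single.
  - apply Lam_adj_code.
    split; [now apply clique_single | split; [now apply clique_pair | split]].
    + left; now exists [v].
    + discriminate.
  - apply Lam_adj_code.
    split; [apply clique_nil | split; [now apply clique_pair | split]].
    + left; now exists [u; v].
    + discriminate.
Qed.

Lemma bipartite_hom_Lam G H u : vert H u -> bipartite G -> hom G (Lam H).
Proof.
  intros hu [c Hc]; exists (fun x => if c x then code [] else code [u]); split.
  - intros x _; destruct (c x).
    + exists []; auto using clique_nil.
    + exists [u]; auto using clique_single.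
  - intros x y h; specialize (Hc x y h).
    destruct (c x), (c y); try congruence.
    + now apply Lam_adj_nil_single.
    + now apply adj_sym, Lam_adj_nil_single.
Qed.

Lemma Lam_growing_path_Komega H (x : nat -> nat) :
  (forall i, adj (Lam H) (x i) (x (S i))) ->
  (forall i, length (decode (x i)) < length (decode (x (S i)))) ->
  contains_Komega H.
Proof.
  intros Hadj Hlt; set (Q := fun i => decode (x i)).
  assert (Hpre : forall i d, prefix (Q i) (Q (i + d))).
  { intros i d; induction d; [rewrite Nat.add_0_r; apply prefix_refl|].
    rewrite Nat.add_succ_r; apply (prefix_trans _ _ _ IHd), comparable_prefix_lt;
      [apply (Lam_adj_decode H _ _ (Hadj _)) | apply Hlt]. }
  apply (chain_Komega H Q).
  - intro i; apply (Lam_adj_decode H _ _ (Hadj i)).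
  - intros i j; destruct (Nat.le_ge_cases i j); [left|right].
    + replace j with (i + (j - i)) by lia; apply Hpre.
    + replace i with (j + (i - j)) by lia; apply Hpre.
  - assert (Hge : forall n, n <= length (Q n))
      by (induction n; [lia | specialize (Hlt n); unfold Q in *; lia]).
    intro n; exists (S n); specialize (Hlt n); specialize (Hge n); unfold Q in *; lia.
Qed.

(** * Odd closed walks *)

Definition walk (G : graph) x y n (w : nat -> nat) :=
  w 0 = x /\ w n = y /\ forall i, i < n -> adj G (w i) (w (S i)).

Lemma walk_refl G x : walk G x x 0 (fun _ => x).
Proof. split; [|split]; auto; intros; lia. Qed.

Lemma walk_edge G x y : adj G x y -> walk G x y 1 (fun i => match i with 0 => x | _ => y end).
Proof. intro h; split; [|split]; auto; intros i Hi; now replace i with 0 by lia. Qed.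

Lemma walk_app G x y z n m w v : walk G x y n w -> walk G y z m v ->
  walk G x z (n + m) (fun i => if i <=? n then w i else v (i - n)).
Proof.
  intros (w0 & wn & Hw) (v0 & vm & Hv); split; [|split]; [easy| |].
  - destruct (Nat.leb_spec (n + m) n).
    + replace m with 0 in * by lia; rewrite Nat.add_0_r; congruence.
    + now replace (n + m - n) with m by lia.
  - intros i Hi; destruct (Nat.leb_spec i n), (Nat.leb_spec (S i) n); try lia.
    + apply Hw; lia.
    + replace i with n by lia; rewrite Nat.sub_succ_l, Nat.sub_diag by lia.
      rewrite wn, <- v0; apply Hv; lia.
    + replace (S i - n) with (S (i - n)) by lia; apply Hv; lia.
Qed.

Lemma walk_rev G x y n w : walk G x y n w -> walk G y x n (fun i => w (n - i)).
Proof.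
  intros (w0 & wn & Hw); split; [|split].
  - now rewrite Nat.sub_0_r.
  - now rewrite Nat.sub_diag.
  - intros i Hi; apply adj_sym; replace (n - i) with (S (n - S i)) by lia; apply Hw; lia.
Qed.

Lemma hom_walk G H f x y n w :
  is_hom G H f -> walk G x y n w -> walk H (f x) (f y) n (fun i => f (w i)).
Proof. intros [_ Hf] (w0 & wn & Hw); split; [|split]; auto; congruence. Qed.

Definition connected G x y := exists n w, walk G x y n w.

Lemma connected_adj G z x y : adj G x y -> connected G z x -> connected G z y.
Proof. intros h (n & w & Hw); do 2 eexists; eapply walk_app; [exact Hw | now apply walk_edge]. Qed.

Lemma least_connected G x : exists z, connected G z x /\ forall z', connected G z' x -> z <= z'.
Proof.
  destruct (dec_inh_nat_subset_has_unique_least_element (fun z => connected G z x))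
    as (z & [Hz Hmin] & _); eauto using classic.
  exists x, 0, (fun _ => x); apply walk_refl.
Qed.

Definition root G x := proj1_sig (constructive_indefinite_description _ (least_connected G x)).

Lemma root_spec G x : connected G (root G x) x /\ forall z, connected G z x -> root G x <= z.
Proof. exact (proj2_sig (constructive_indefinite_description _ (least_connected G x))). Qed.

Lemma root_adj G x y : adj G x y -> root G x = root G y.
Proof.
  intro h; destruct (root_spec G x) as [Rx Mx], (root_spec G y) as [Ry My].
  apply Nat.le_antisymm; [apply Mx, (connected_adj G _ y); auto using adj_sym |
                          apply My, (connected_adj G _ x); auto].
Qed.

Lemma walk_parity G x y a b w v :
  (forall z m u, walk G z z m u -> ~ Nat.Odd m) ->
  walk G x y a w -> walk G x y b v -> Nat.even a = Nat.even b.
Proof.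
  intros Hno Hw Hv; pose proof (walk_app G _ _ _ _ _ _ _ Hw (walk_rev G _ _ _ _ Hv)) as Hc.
  destruct (Nat.Even_or_Odd (a + b)) as [He|Ho]; [|exfalso; eapply Hno; eauto].
  apply Nat.even_spec in He; rewrite Nat.even_add in He.
  destruct (Nat.even a), (Nat.even b); easy.
Qed.

(* Colour each vertex by the parity of a walk from the root of its component. *)
Lemma not_bipartite_odd_closed_walk G :
  ~ bipartite G -> exists x m w, walk G x x m w /\ Nat.Odd m.
Proof.
  intro NB; apply NNPP; intro Hodd; apply NB.
  assert (Hno : forall z m u, walk G z z m u -> ~ Nat.Odd m) by (intros z m u Hw Ho; apply Hodd; exists z, m, u; auto).
  set (len := fun x => proj1_sig (constructive_indefinite_description _ (proj1 (root_spec G x)))).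
  assert (Hlen : forall x, exists w, walk G (root G x) x (len x) w)
    by (intro x; exact (proj2_sig (constructive_indefinite_description _ (proj1 (root_spec G x))))).
  exists (fun x => Nat.even (len x)); intros x y h E.
  destruct (Hlen x) as [wx Hx], (Hlen y) as [wy Hy].
  rewrite (root_adj G x y h) in Hx.
  pose proof (walk_parity G _ _ _ _ _ _ Hno (walk_app G _ _ _ _ _ _ _ Hx (walk_edge G x y h)) Hy) as Hp.
  rewrite <- E, Nat.add_1_r, Nat.even_succ, <- Nat.negb_even in Hp.
  destruct (Nat.even (len x)); discriminate.
Qed.

(** * Ramsey's theorem *)

Definition increasing (s : nat -> nat) := forall a b, a < b -> s a < s b.

Definition ascending (l : list nat) :=
  forall i j, i < j -> j < length l -> nth i l 0 < nth j l 0.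

Lemma increasing_ge s i : increasing s -> i <= s i.
Proof. intro Hs; induction i; [lia|]; specialize (Hs i (S i) ltac:(lia)); lia. Qed.

Lemma increasing_reflect s a b : increasing s -> s a < s b -> a < b.
Proof.
  intros Hs h; destruct (Nat.lt_total a b) as [|[->|h']]; auto; [lia|].
  specialize (Hs _ _ h'); lia.
Qed.

Lemma nth_map_lt (f : nat -> nat) l p : p < length l -> nth p (map f l) 0 = f (nth p l 0).
Proof. intro h; rewrite (nth_indep _ 0 (f 0)) by (rewrite length_map; lia); apply map_nth. Qed.

Lemma ascending_map s l : increasing s -> ascending l -> ascending (map s l).
Proof.
  intros Hs Hl i j h h'; rewrite length_map in h'.
  rewrite !nth_map_lt by lia; apply Hs, Hl; auto.
Qed.

Lemma ascending_map_reflect s l : increasing s -> ascending (map s l) -> ascending l.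
Proof.
  intros Hs Hl i j h h'; apply (increasing_reflect s); auto.
  rewrite <- !nth_map_lt by lia; apply Hl; rewrite ?length_map; auto.
Qed.

Lemma ascending_cons i0 l : ascending (i0 :: l) -> ascending l /\ forall i, In i l -> i0 < i.
Proof.
  intro Hs; split.
  - intros i j h hj; apply (Hs (S i) (S j)); simpl; lia.
  - intros i Hi; apply In_nth with (d := 0) in Hi as (p & hp & <-).
    apply (Hs 0 (S p)); simpl; lia.
Qed.

Lemma infinite_pigeonhole (c : nat -> bool) :
  exists b rho, increasing rho /\ forall j, c (rho j) = b.
Proof.
  destruct (classic (forall N, exists n, N <= n /\ c n = true)) as [HA|HA].
  - set (next := fun N => proj1_sig (constructive_indefinite_description _ (HA N))).
    assert (Hn : forall N, N <= next N /\ c (next N) = true)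
      by (intro N; exact (proj2_sig (constructive_indefinite_description _ (HA N)))).
    set (rho := fix rho j := match j with 0 => next 0 | S j => next (S (rho j)) end).
    exists true, rho; split.
    + assert (Hstep : forall j, rho j < rho (S j)) by (intro j; apply Hn).
      intros a b h; induction h; [apply Hstep|]; specialize (Hstep m); lia.
    + intros [|j]; apply Hn.
  - apply not_all_ex_not in HA as [N HN].
    exists false, (fun j => N + j); split; [intros a b h; lia|].
    intro j; destruct (c (N + j)) eqn:E; auto.
    exfalso; apply HN; exists (N + j); split; auto; lia.
Qed.

Section Tower.

Variable step : (nat -> nat) -> nat -> nat.
Hypothesis step_increasing : forall t, increasing (step t).

(* The infinite sets of the usual proof of Ramsey's theorem, as enumerations:
   [tower (S n)] enumerates the part of [tower n] selected by [step (tower n)],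
   after its least element has been removed. *)
Fixpoint tower (n : nat) : nat -> nat :=
  match n with 0 => fun i => i | S n => fun i => tower n (S (step (tower n) i)) end.

Fixpoint tower_offset (n d : nat) : nat -> nat :=
  match d with
  | 0 => fun i => i
  | S d => fun i => tower_offset n d (S (step (tower (n + d)) i))
  end.

Lemma tower_increasing n : increasing (tower n).
Proof.
  induction n; intros a b h; simpl; auto.
  apply IHn; specialize (step_increasing (tower n) a b h); lia.
Qed.

Lemma tower_add n d i : tower (n + d) i = tower n (tower_offset n d i).
Proof.
  revert i; induction d; intro i; [now rewrite Nat.add_0_r|].
  rewrite Nat.add_succ_r; simpl; apply IHd.
Qed.

Lemma tower_offset_ge n d i : d + i <= tower_offset n d i.
Proof.
  revert i; induction d; intro i; simpl; [lia|].
  specialize (IHd (S (step (tower (n + d)) i))).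
  pose proof (increasing_ge _ i (step_increasing (tower (n + d)))); lia.
Qed.

End Tower.

Definition homogeneous k (c : list nat -> bool) (s : nat -> nat) (b : bool) :=
  forall idx, length idx = k -> ascending idx -> c (map s idx) = b.

Definition link (c : list nat -> bool) (t : nat -> nat) (l : list nat) :=
  c (t 0 :: map (fun i => t (S i)) l).

Lemma ramsey_step k :
  (forall c, exists s b, increasing s /\ homogeneous k c s b) ->
  forall c, exists s b, increasing s /\ homogeneous (S k) c s b.
Proof.
  intros IH c.
  assert (IH' : forall t, exists p : (nat -> nat) * bool,
             increasing (fst p) /\ homogeneous k (link c t) (fst p) (snd p))
    by (intro t; destruct (IH (link c t)) as (s & b & ?); now exists (s, b)).
  set (sel := fun t => proj1_sig (constructive_indefinite_description _ (IH' t))).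
  assert (Hsel : forall t, increasing (fst (sel t)) /\
                           homogeneous k (link c t) (fst (sel t)) (snd (sel t)))
    by (intro t; exact (proj2_sig (constructive_indefinite_description _ (IH' t)))).
  set (step := fun t => fst (sel t)).
  assert (Hstep : forall t, increasing (step t)) by (intro t; apply Hsel).
  set (tau := tower step).
  destruct (infinite_pigeonhole (fun n => snd (sel (tau n)))) as (b & rho & Hrho & Hb).
  set (s := fun j => tau (rho j) 0).
  assert (Hs_from : forall n j, n <= rho j -> s j = tau n (tower_offset step n (rho j - n) 0)).
  { intros n j h; unfold s, tau; rewrite <- tower_add; f_equal; lia. }
  assert (Hs : increasing s).
  { intros a a' h; pose proof (Hrho _ _ h).
    rewrite (Hs_from (rho a) a') by lia; apply tower_increasing; auto.
    pose proof (tower_offset_ge step Hstep (rho a) (rho a' - rho a) 0); lia. }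
  exists s, b; split; auto.
  intros [|i0 rest] Hl Hasc; [discriminate|]; injection Hl as Hl.
  destruct (ascending_cons _ _ Hasc) as [Hrest Hgt].
  set (n := rho i0).
  set (idx := map (fun i => tower_offset step (S n) (rho i - S n) 0) rest).
  assert (Hmap : map s rest = map (tau (S n)) idx).
  { unfold idx; rewrite map_map; apply map_ext_in; intros i Hi.
    apply Hs_from; specialize (Hrho _ _ (Hgt i Hi)); unfold n; lia. }
  assert (Hidx : ascending idx).
  { apply (ascending_map_reflect (tau (S n))); [now apply tower_increasing|].
    rewrite <- Hmap; now apply ascending_map. }
  rewrite <- (Hb i0); change (c (tau n 0 :: map s rest) = snd (sel (tau n))).
  rewrite Hmap; transitivity (link c (tau n) (map (step (tau n)) idx)).
  - unfold link; now rewrite map_map.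
  - apply Hsel; auto; unfold idx; now rewrite length_map.
Qed.

Theorem ramsey k c : exists s b, increasing s /\ homogeneous k c s b.
Proof.
  revert c; induction k as [|k IH]; [|now apply ramsey_step].
  intro c; exists (fun i => i), (c []); split; [intros ? ? ?; auto|].
  intros [|] Hl _; [reflexivity|discriminate].
Qed.

(** * Shift graphs *)

Definition tuple k (l : list nat) := length l = k /\ ascending l.
Definition shift (l l' : list nat) := exists b, l' = tl l ++ [b].

Definition shift_vert k n := exists l, n = code l /\ tuple k l.
Definition shift_adj k n m := exists l l', n = code l /\ m = code l' /\
  tuple k l /\ tuple k l' /\ (shift l l' \/ shift l' l) /\ l <> l'.

Lemma shift_adj_sym k x y : shift_adj k x y -> shift_adj k y x.
Proof. intros (l & l' & -> & -> & h); exists l', l; intuition. Qed.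

Lemma shift_adj_irrefl k x : ~ shift_adj k x x.
Proof. intros (l & l' & E & E' & _ & _ & _ & h); apply h, code_inj; congruence. Qed.

Lemma shift_adj_vert k x y : shift_adj k x y -> shift_vert k x.
Proof. intros (l & l' & E & _ & h & _); now exists l. Qed.

Definition shift_graph (k : nat) : graph :=
  Graph (shift_vert k) (shift_adj k) (shift_adj_sym k) (shift_adj_irrefl k) (shift_adj_vert k).

Lemma shift_adj_decode k x y :
  adj (shift_graph k) x y ->
  tuple k (decode x) /\ tuple k (decode y) /\
  (shift (decode x) (decode y) \/ shift (decode y) (decode x)).
Proof.
  intros (l & l' & -> & -> & h1 & h2 & h3 & _); now rewrite !decode_code.
Qed.

Lemma nth_tl (l : list nat) i : nth i (tl l) 0 = nth (S i) l 0.
Proof. destruct l; simpl; auto; now destruct i. Qed.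

Lemma length_tl (l : list nat) : length (tl l) = length l - 1.
Proof. destruct l; simpl; lia. Qed.

Lemma shift_moves_entry k l l' j :
  length l = k -> length l' = k -> (shift l l' \/ shift l' l) -> 1 <= j -> j + 1 < k ->
  exists j', (j' = j - 1 \/ j' = S j) /\ nth j' l' 0 = nth j l 0.
Proof.
  intros Hl Hl' [[b ->]|[b ->]] h1 h2.
  - exists (j - 1); split; auto.
    rewrite app_nth1 by (rewrite length_tl; lia); rewrite nth_tl; f_equal; lia.
  - exists (S j); split; auto.
    rewrite app_nth1 by (rewrite length_tl; lia); now rewrite nth_tl.
Qed.

Lemma shift_walk_tracks k x y n w p :
  walk (shift_graph k) x y n w -> n <= p -> p + n < k ->
  forall t, t <= n -> exists j, p <= j + t /\ j <= p + t /\ Nat.Even (j + p + t) /\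
    nth j (decode (w t)) 0 = nth p (decode (w 0)) 0.
Proof.
  intros (_ & _ & Hw) h1 h2; induction t as [|t IH]; intro Ht.
  - exists p; split; [lia | split; [lia | split; [exists p; lia | easy]]].
  - destruct IH as (j & hj1 & hj2 & [q hq] & hj); [lia|].
    destruct (shift_adj_decode k _ _ (Hw t ltac:(lia))) as ([Hl _] & [Hl' _] & Hs).
    destruct (shift_moves_entry k _ _ j Hl Hl' Hs) as (j' & [-> | ->] & E); try lia.
    + exists (j - 1); split; [lia | split; [lia | split; [exists q; lia | congruence]]].
    + exists (S j); split; [lia | split; [lia | split; [exists (S q); lia | congruence]]].
Qed.

(* An entry cannot return to its position after an odd number of moves. *)
Lemma shift_graph_odd_girth k x m w :
  2 * m + 1 <= k -> walk (shift_graph k) x x m w -> ~ Nat.Odd m.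
Proof.
  intros Hk Hw [q Hq].
  destruct (shift_walk_tracks k x x m w m Hw (le_n m) ltac:(lia) m (le_n m))
    as (j & _ & hj & [p hp] & E).
  destruct Hw as (W0 & Wm & Hw).
  rewrite Wm, <- W0 in E.
  destruct (shift_adj_decode k _ _ (Hw 0 ltac:(lia))) as ([Hl Hasc] & _).
  destruct (Nat.lt_total j m) as [h|[h|h]]; [| lia |].
  - specialize (Hasc j m h ltac:(lia)); lia.
  - specialize (Hasc m j h ltac:(lia)); lia.
Qed.

Lemma shift_graph_triangle_free k : 7 <= k -> triangle_free (shift_graph k).
Proof.
  intros Hk a b c h1 h2 h3.
  apply (shift_graph_odd_girth k a 3 (fun i => match i with 1 => b | 2 => c | _ => a end));
    [lia| |now exists 1].
  split; [|split]; auto.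
  intros [|[|[|]]] Hi; try lia; auto using adj_sym.
Qed.

Lemma ascending_seq i n : ascending (seq i n).
Proof. intros a b h h'; rewrite length_seq in h'; rewrite !seq_nth by lia; lia. Qed.

Lemma shift_graph_ray k s : 1 <= k -> increasing s ->
  forall i, adj (shift_graph k) (code (map s (seq i k))) (code (map s (seq (S i) k))).
Proof.
  intros Hk Hs i.
  assert (Ht : forall i, tuple k (map s (seq i k)))
    by (intro; split; [now rewrite length_map, length_seq | apply ascending_map, ascending_seq; auto]).
  exists (map s (seq i k)), (map s (seq (S i) k)).
  split; [easy | split; [easy | split; [apply Ht | split; [apply Ht | split]]]].
  - destruct k as [|k]; [lia|]; left; exists (s (S i + k)).
    rewrite seq_S, map_app; reflexivity.
  - intro E; assert (Hd : nth 0 (map s (seq i k)) 0 = nth 0 (map s (seq (S i) k)) 0)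
      by now rewrite E.
    rewrite !nth_map_lt, !seq_nth in Hd by (rewrite ?length_seq; lia).
    specialize (Hs (i + 0) (S i + 0) ltac:(lia)); lia.
Qed.

(* Ramsey's theorem on the colouring "the clique grows along the edge" of
   the (k+1)-sets, which are exactly the shift edges. *)
Lemma shift_graph_not_hom_Lam k H :
  1 <= k -> ~ contains_Komega H -> ~ hom (shift_graph k) (Lam H).
Proof.
  intros Hk HK (f & _ & Hfa).
  set (len := fun l => length (decode (f (code l)))).
  destruct (ramsey (S k) (fun l => len (firstn k l) <? len (tl l))) as (s & b & Hs & Hb).
  set (x := fun i => f (code (map s (seq i k)))).
  assert (Hx : forall i, adj (Lam H) (x i) (x (S i)))
    by (intro i; apply Hfa, shift_graph_ray; auto).
  assert (Hcol : forall i, (length (decode (x i)) <? length (decode (x (S i)))) = b).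
  { intro i; rewrite <- (Hb (seq i (S k))) by (apply length_seq || apply ascending_seq).
    rewrite seq_S at 1; rewrite map_app, firstn_app, length_map, length_seq, Nat.sub_diag.
    rewrite firstn_all2 by (rewrite length_map, length_seq; lia).
    now rewrite app_nil_r. }
  destruct b.
  - apply HK, (Lam_growing_path_Komega H x Hx); intro i; apply Nat.ltb_lt, Hcol.
  - apply (no_decreasing_sequence (fun i => length (decode (x i)))); intro i.
    specialize (Hcol i); apply Nat.ltb_ge in Hcol.
    pose proof (Lam_adj_length H _ _ (Hx i)); lia.
Qed.

(** * The universal triangle-free graph *)

Lemma course_of_values (F : nat -> (nat -> nat) -> nat) :
  (forall n g g', (forall m, m < n -> g m = g' m) -> F n g = F n g') ->
  exists f, forall n, f n = F n f.
Proof.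
  intro HF.
  set (fl := fix fl n := match n with
             | 0 => [] | S n => fl n ++ [F n (fun m => nth m (fl n) 0)] end).
  assert (Hfl : forall n, fl (S n) = fl n ++ [F n (fun m => nth m (fl n) 0)]) by reflexivity.
  assert (Hlen : forall n, length (fl n) = n)
    by (induction n; auto; rewrite Hfl, length_app, IHn; simpl; lia).
  set (f := fun n => nth n (fl (S n)) 0).
  assert (Hnth : forall n m, m < n -> nth m (fl n) 0 = f m).
  { induction n; intros m h; [lia|]; destruct (Nat.eq_dec m n) as [->|h']; [reflexivity|].
    rewrite Hfl, app_nth1 by (rewrite Hlen; lia); apply IHn; lia. }
  exists f; intro n; unfold f at 1.
  rewrite Hfl, app_nth2, Hlen, Nat.sub_diag by (rewrite Hlen; lia); apply HF, Hnth.
Qed.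

(* A vertex [x] of the universal triangle-free graph [T] lists its smaller
   neighbours in [tl (decode x)]; the head of [decode x] is a free tag. *)
Definition lower x := tl (decode x).
Definition T_link u v := In u (lower v) \/ In v (lower u).
Definition T_vert x := forall a b, In a (lower x) -> In b (lower x) -> ~ T_link a b.
Definition T_adj u v := T_vert u /\ T_vert v /\ u <> v /\ T_link u v.

Lemma T_adj_sym x y : T_adj x y -> T_adj y x.
Proof. unfold T_adj, T_link; intuition. Qed.

Lemma T_adj_irrefl x : ~ T_adj x x.
Proof. intros (_ & _ & h & _); auto. Qed.

Lemma T_adj_vert x y : T_adj x y -> T_vert x.
Proof. now intros []. Qed.

Definition T : graph := Graph T_vert T_adj T_adj_sym T_adj_irrefl T_adj_vert.

Lemma lower_lt a x : In a (lower x) -> a < x.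
Proof.
  unfold lower; rewrite <- (code_decode x) at 2; destruct (decode x) as [|hd r]; simpl; [tauto|].
  intro h; pose proof (In_code_lt a r h); pose proof (code_cons_gt hd r); lia.
Qed.

Lemma T_adj_lower u v : adj T u v -> u < v -> In u (lower v).
Proof. intros (_ & _ & _ & [h|h]) hl; auto; apply lower_lt in h; lia. Qed.

Lemma T_triangle_free : triangle_free T.
Proof.
  assert (Htop : forall a b c, adj T a c -> adj T b c -> adj T a b -> a < c -> b < c -> False).
  { intros a b c hac hbc hab l1 l2.
    apply (proj1 (proj2 hac) a b); try apply T_adj_lower; auto; apply hab. }
  intros a b c h1 h2 h3; pose proof (adj_neq T _ _ h1); pose proof (adj_neq T _ _ h2);
    pose proof (adj_neq T _ _ h3).
  destruct (Nat.lt_total a c) as [l1|[l1|l1]], (Nat.lt_total b c) as [l2|[l2|l2]],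
    (Nat.lt_total a b) as [l3|[l3|l3]]; try lia;
    first [ apply (Htop a b c); auto; lia
          | apply (Htop a c b); auto using adj_sym; lia
          | apply (Htop b c a); auto using adj_sym; lia ].
Qed.

(* Vertex [n] of [G] is sent to the code of [n :: images of its smaller neighbours]. *)
Lemma T_universal G : triangle_free G -> hom G T.
Proof.
  intro TF.
  set (E := fun n => filter (fun m => if excluded_middle_informative (adj G m n) then true else false)
                            (seq 0 n)).
  assert (HE : forall m n, In m (E n) <-> m < n /\ adj G m n).
  { intros m n; unfold E; rewrite filter_In, in_seq.
    destruct excluded_middle_informative; intuition (try lia; try discriminate). }
  destruct (course_of_values (fun n g => code (n :: map g (E n)))) as [f Hf].
  { intros n g g' Hg; f_equal; f_equal; apply map_ext_in; intros m Hm; apply Hg, HE, Hm. }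
  assert (Hinj : forall n n', f n = f n' -> n = n')
    by (intros n n' E'; rewrite (Hf n), (Hf n') in E'; apply code_inj in E'; congruence).
  assert (Hlower : forall n, lower (f n) = map f (E n))
    by (intro n; unfold lower; now rewrite Hf, decode_code).
  assert (Hin : forall m n, In (f m) (lower (f n)) <-> m < n /\ adj G m n).
  { intros m n; rewrite Hlower, <- HE; split; [|apply in_map].
    intro h; apply in_map_iff in h as (x & hx & hx'); apply Hinj in hx; now subst. }
  assert (Hv : forall n, T_vert (f n)).
  { intros n a b ha hb hr; rewrite Hlower in ha, hb.
    apply in_map_iff in ha as (m & <- & hm); apply in_map_iff in hb as (m' & <- & hm').
    apply HE in hm as [_ hm]; apply HE in hm' as [_ hm'].
    destruct hr as [hr|hr]; apply Hin in hr as [_ hr]; eauto. }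
  exists f; split; [intros; apply Hv|].
  intros x y h; split; [apply Hv | split; [apply Hv | split]].
  - intro E'; apply Hinj in E'; subst; exact (adj_irrefl G y h).
  - destruct (Nat.lt_total x y) as [l|[->|l]].
    + left; now apply Hin.
    + now apply adj_irrefl in h.
    + right; apply Hin; auto using adj_sym.
Qed.

Definition C5_adj x y :=
  x < 5 /\ y < 5 /\ (y = S x \/ x = S y \/ (x = 0 /\ y = 4) \/ (x = 4 /\ y = 0)).

Lemma C5_adj_sym x y : C5_adj x y -> C5_adj y x.
Proof. unfold C5_adj; lia. Qed.
Lemma C5_adj_irrefl x : ~ C5_adj x x.
Proof. unfold C5_adj; lia. Qed.
Lemma C5_adj_vert x y : C5_adj x y -> x < 5.
Proof. unfold C5_adj; lia. Qed.

Definition C5 : graph := Graph (fun x => x < 5) C5_adj C5_adj_sym C5_adj_irrefl C5_adj_vert.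

Lemma C5_triangle_free : triangle_free C5.
Proof. intros a b c; simpl; unfold C5_adj; lia. Qed.

Lemma C5_not_bipartite : ~ bipartite C5.
Proof.
  intros [col Hc]; simpl in Hc.
  pose proof (Hc 0 1 ltac:(unfold C5_adj; lia)); pose proof (Hc 1 2 ltac:(unfold C5_adj; lia)).
  pose proof (Hc 2 3 ltac:(unfold C5_adj; lia)); pose proof (Hc 3 4 ltac:(unfold C5_adj; lia)).
  pose proof (Hc 4 0 ltac:(unfold C5_adj; lia)).
  destruct (col 0), (col 1), (col 2), (col 3), (col 4); congruence.
Qed.

Lemma T_GRA_omega : GRA_omega T.
Proof.
  split; [|apply triangle_free_Komega_free, T_triangle_free].
  intro B; apply C5_not_bipartite, (bipartite_hom C5 T); auto.
  apply T_universal, C5_triangle_free.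
Qed.

(* A triangle on the vertices o, o+1, o+2; the offset makes copies distinct. *)
Definition K3_vert o x := o <= x <= o + 2.
Definition K3_adj o x y := K3_vert o x /\ K3_vert o y /\ x <> y.

Lemma K3_adj_sym o x y : K3_adj o x y -> K3_adj o y x.
Proof. unfold K3_adj; intuition. Qed.
Lemma K3_adj_irrefl o x : ~ K3_adj o x x.
Proof. unfold K3_adj; intuition. Qed.
Lemma K3_adj_vert o x y : K3_adj o x y -> K3_vert o x.
Proof. now intros []. Qed.

Definition K3 o : graph := Graph (K3_vert o) (K3_adj o) (K3_adj_sym o) (K3_adj_irrefl o) (K3_adj_vert o).

Lemma K3_GRA_omega o : GRA_omega (K3 o).
Proof.
  split.
  - apply (triangle_not_bipartite (K3 o) o (o + 1) (o + 2)); simpl; unfold K3_adj, K3_vert; lia.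
  - intros (g & Hv & Hi & _); simpl in Hv; unfold K3_vert in Hv.
    pose proof (Hv 0); pose proof (Hv 1); pose proof (Hv 2); pose proof (Hv 3).
    pose proof (Hi 0 1 ltac:(lia)); pose proof (Hi 0 2 ltac:(lia)); pose proof (Hi 0 3 ltac:(lia)).
    pose proof (Hi 1 2 ltac:(lia)); pose proof (Hi 1 3 ltac:(lia)); pose proof (Hi 2 3 ltac:(lia)).
    lia.
Qed.

Lemma hom_K3_or_hom_T G o : hom (K3 o) G \/ hom G T.
Proof.
  destruct (classic (triangle_free G)) as [TF|NT]; [right; now apply T_universal|left].
  apply NNPP; intro Hno; apply NT; intros a b c h1 h2 h3; apply Hno.
  exists (fun x => if x =? o then a else if x =? o + 1 then b else c); split.
  - intros x _; destruct (x =? o), (x =? o + 1); eapply adj_vert; eauto using adj_sym.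
  - intros x y (hx & hy & hne); unfold K3_vert in *.
    destruct (Nat.eqb_spec x o), (Nat.eqb_spec x (o + 1)), (Nat.eqb_spec y o),
      (Nat.eqb_spec y (o + 1)); try lia; auto using adj_sym.
Qed.

Lemma T_neq_K3 o : T <> K3 o.
Proof.
  intro E; assert (Hx : vert T (code [o + 3])).
  { intros a b ha; unfold lower in ha; rewrite decode_code in ha; destruct ha. }
  pose proof (code_cons_gt (o + 3) []).
  rewrite E in Hx; cbn [vert K3] in Hx; unfold K3_vert in Hx; lia.
Qed.

Lemma K3_neq o o' : o + 3 <= o' -> K3 o <> K3 o'.
Proof.
  intros h E; assert (Hx : vert (K3 o) o) by (simpl; unfold K3_vert; lia).
  rewrite E in Hx; cbn [vert K3] in Hx; unfold K3_vert in Hx; lia.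
Qed.

Lemma shift_graph_GRA_omega k : 7 <= k -> GRA_omega (shift_graph k).
Proof.
  intro Hk; split; [|apply triangle_free_Komega_free, shift_graph_triangle_free; auto].
  intro B; apply (shift_graph_not_hom_Lam k (K3 0)); [lia | apply K3_GRA_omega |].
  apply (bipartite_hom_Lam _ _ 0); auto; simpl; unfold K3_vert; lia.
Qed.

Lemma odd_closed_walk_not_hom_shift_graph G x m w k :
  walk G x x m w -> Nat.Odd m -> 2 * m + 1 <= k -> ~ hom G (shift_graph k).
Proof.
  intros Hw Ho Hk (f & Hf).
  exact (shift_graph_odd_girth k _ m _ Hk (hom_walk G _ f _ _ m w Hf Hw) Ho).
Qed.

Lemma exists_independent G1 : GRA_omega G1 -> exists G, GRA_omega G /\ independent G G1.
Proof.
  intros [NB NK]; destruct (classic (hom G1 (Lam G1))) as [Hh|Hh].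
  - destruct (not_bipartite_odd_closed_walk G1 NB) as (x & m & w & Hw & Hodd).
    exists (shift_graph (2 * m + 7)); split; [apply shift_graph_GRA_omega; lia | split].
    + intro Hf; apply (shift_graph_not_hom_Lam (2 * m + 7) G1); [lia | auto |].
      eapply hom_trans; eauto.
    + apply (odd_closed_walk_not_hom_shift_graph G1 x m w); auto; lia.
  - destruct (not_bipartite_edge G1 NB) as (u & v & huv).
    exists (Lam G1); split; [split|split]; auto.
    + now apply (Lam_not_bipartite G1 u v).
    + now apply Lam_Komega_free.
    + intro Hf; apply NK, hom_Lam_Komega, Hf.
Qed.

Theorem corollary2 (t : nat) (ht : 0 < t) :
  (forall Gs : nat -> graph,
     (forall i j, i < t -> j < t -> i <> j -> Gs i <> Gs j) ->
     (forall i, i < t -> GRA_omega (Gs i)) ->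
     exists G, GRA_omega G /\ (forall i, i < t -> independent G (Gs i)))
  <-> t = 1.
Proof.
  split.
  - intro Hi; destruct (Nat.eq_dec t 1) as [|Ht]; auto; exfalso.
    destruct (Hi (fun i => match i with 0 => T | S j => K3 (3 * j) end)) as (G & _ & Hind).
    + intros [|i] [|j] _ _ hij; [lia | apply T_neq_K3 | apply not_eq_sym, T_neq_K3 |].
      destruct (Nat.lt_total i j) as [h|[h|h]];
        [apply K3_neq | lia | apply not_eq_sym, K3_neq]; lia.
    + intros [|i] _; [apply T_GRA_omega | apply K3_GRA_omega].
    + destruct (hom_K3_or_hom_T G 0) as [h|h];
        [apply (proj2 (Hind 1 ltac:(lia))) | apply (proj1 (Hind 0 ltac:(lia)))]; exact h.
  - intros -> Gs _ HG; destruct (exists_independent (Gs 0) (HG 0 ltac:(lia))) as (G & HGG & Hind).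
    exists G; split; auto; intros i hi; now replace i with 0 by lia.
Qed.
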